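(* For $n\in\mathbb N$, $$\Phi^*_n(1)=\begin{cases}0 & n=1,\\ p^e & n=p^e \text{ with } p \text{ prime},\ e\ge1,\\ 1&\text{otherwise}.\end{cases}$$ Equivalently, $\Phi^*_n(1)=e^{\Lambda^*(n)}$ for all $n>1$.
   Context: $d\mid\mid n$ means $d\mid n$ and $\gcd(d,n/d)=1$; $(j,n)_*=\max\{d: d\mid j,\ d\mid\mid n\}$; $\Phi^*_n(x)=\prod_{1\le j\le n,\ (j,n)_*=1}(x-e^{2\pi i j/n})$. The unitary von Mangoldt function is $\Lambda^*(n)=a\log p$ if $n=p^a$ is a prime power with $a\ge1$, and $\Lambda^*(n)=0$ otherwise. *)

From HB Require Import structures.
From mathcomp Require Import all_boot all_order all_algebra all_field.
Set Implicit Arguments. Unset Strict Implicit. Unset Printing Implicit Defensive.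
Import Order.TTheory GRing.Theory Num.Theory.

Definition udvd (d n : nat) : bool := (d %| n) && coprime d (n %/ d).

(* (j,n)_* = max { d : d | j, d || n }  (d ranges over 0..n; for n >= 1, d = 1
   always qualifies and every unitary divisor of n is <= n) *)
Definition ugcd (j n : nat) : nat :=
  \max_(d < n.+1 | (d %| j) && udvd d n) d.

Local Open Scope ring_scope.

(* e^{2 pi i / n} in algC: n.-root (-1) is the n-th root of -1 with minimal
   nonnegative argument, i.e. e^{i pi / n}; its square is e^{2 pi i / n}. *)
Definition zeta (n : nat) : algC := (n.-root (-1)) ^+ 2.

Definition uPhi (n : nat) : {poly algC} :=
  \prod_(1 <= j < n.+1 | ugcd j n == 1%N) ('X - (zeta n ^+ j)%:P).

(* For n = p^e the condition (j, n)_* = 1 just says that n does not divide j,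
   and the product of 1 - z^j over 0 < j < n is n for a primitive n-th root z.
   Otherwise n = q m with q = p^a the full power of some prime p in n and
   m > 1 coprime to p; then (j, n)_* = 1 iff q does not divide j and
   (j, m)_* = 1, a condition that is m-periodic and invariant under j |-> q j.
   Grouping indices by their residue mod m and using
   prod_k (1 - y w^k) = 1 - y^q for a primitive q-th root w shows that the
   products of 1 - z^j over all such j and over the multiples of q among them
   coincide, so the product over the remaining j is 1.
   The analytic input is that zeta n, the square of the principal n-th root
   of -1, is a primitive n-th root of unity. *)

From HB Require Import structures.
From mathcomp Require Import all_boot all_order all_algebra all_field.
From mathcomp Require Import ring.
Set Implicit Arguments. Unset Strict Implicit. Unset Printing Implicit Defensive.
Import Order.TTheory GRing.Theory Num.Theory.

Definition unitary_coprime (j n : nat) :=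
  forall r, prime r -> (r %| n)%N -> ~~ (r ^ logn r n %| j)%N.

Lemma udvd_pfactor p n : prime p -> (0 < n)%N -> udvd (p ^ logn p n) n.
Proof.
move=> p_pr n_gt0; have [m p'm def_n] := pfactor_coprime p_pr n_gt0.
rewrite /udvd; set e := logn p n in def_n *.
have pe_gt0 : (0 < p ^ e)%N by rewrite expn_gt0 prime_gt0.
by rewrite def_n dvdn_mull // (mulnK _ pe_gt0) coprimeXl.
Qed.

Lemma udvd_logn r d n :
  prime r -> (0 < n)%N -> (r %| d)%N -> udvd d n -> logn r n = logn r d.
Proof.
move=> r_pr n_gt0 rd /andP[dn cop].
have d_gt0 : (0 < d)%N by apply: dvdn_gt0 dn.
have nd_gt0 : (0 < n %/ d)%N by rewrite divn_gt0 // dvdn_leq.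
have r'nd : coprime r (n %/ d) := coprime_dvdl rd cop.
have := lognM r nd_gt0 d_gt0.
by rewrite (logn_coprime r'nd) (divnK dn) => ->.
Qed.

Lemma leq_ugcd d j n : (0 < n)%N -> (d %| j)%N -> udvd d n -> (d <= ugcd j n)%N.
Proof.
move=> n_gt0 dj dn; have d_le_n : (d < n.+1)%N by rewrite ltnS dvdn_leq // (andP dn).1.
by apply: (@leq_bigmax_cond _ _ _ (Ordinal d_le_n)); rewrite /= dj.
Qed.

Lemma ugcd_eq1P j n : (0 < n)%N -> reflect (unitary_coprime j n) (ugcd j n == 1%N).
Proof.
move=> n_gt0; apply: (iffP eqP) => [ugcd1 r r_pr rn | ucop].
  apply/negP => rj; have := leq_ugcd n_gt0 rj (udvd_pfactor r_pr n_gt0).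
  rewrite ugcd1 leqNgt (leq_trans (prime_gt1 r_pr)) //.
  have e_gt0 : (0 < logn r n)%N by rewrite logn_gt0 mem_primes r_pr n_gt0.
  by rewrite -{1}[r]expn1 leq_pexp2l // prime_gt0.
apply/eqP; rewrite eqn_leq (leq_ugcd n_gt0 (dvd1n j)) ?andbT; last first.
  by rewrite /udvd dvd1n coprime1n.
apply/bigmax_leqP => d /andP[dj dn]; rewrite leqNgt; apply/negP => d_gt1.
have r_pr := pdiv_prime d_gt1; have rd := pdiv_dvd d.
have rn : (pdiv d %| n)%N := dvdn_trans rd (andP dn).1.
have := ucop _ r_pr rn; rewrite (udvd_logn r_pr n_gt0 rd dn).
by rewrite (dvdn_trans (pfactor_dvdnn _ _) dj).
Qed.

Lemma ugcd1n j : ugcd j 1 == 1%N.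
Proof. by apply/ugcd_eq1P => // r r_pr; rewrite dvdn1 => /eqP r1; rewrite r1 in r_pr. Qed.

Lemma ugcd_eq1_pfactor j p a :
  prime p -> (0 < a)%N -> (ugcd j (p ^ a) == 1%N) = ~~ (p ^ a %| j)%N.
Proof.
move=> p_pr a_gt0; have pa_gt0 : (0 < p ^ a)%N by rewrite expn_gt0 prime_gt0.
apply/(ugcd_eq1P _ pa_gt0)/idP => [|paj r r_pr].
  by move/(_ p p_pr); rewrite pfactorK // dvdn_exp //; apply.
by rewrite Euclid_dvdX // dvdn_prime2 // => /andP[/eqP-> _]; rewrite pfactorK.
Qed.

Lemma logn_Mcoprime r c m :
  (0 < c)%N -> (0 < m)%N -> (r %| c)%N -> coprime c m -> logn r (c * m) = logn r c.
Proof.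
by move=> c_gt0 m_gt0 rc cop; rewrite lognM // (logn_coprime (coprime_dvdl rc cop)) addn0.
Qed.

Lemma ugcd_eq1M j c m : (0 < c)%N -> (0 < m)%N -> coprime c m ->
  (ugcd j (c * m) == 1%N) = (ugcd j c == 1%N) && (ugcd j m == 1%N).
Proof.
move=> c_gt0 m_gt0 cop; have cm_gt0 : (0 < c * m)%N by rewrite muln_gt0 c_gt0.
have lognMr r : (r %| m)%N -> logn r (c * m) = logn r m.
  by move=> rm; rewrite mulnC logn_Mcoprime // coprime_sym.
apply/(ugcd_eq1P _ cm_gt0)/andP => [ucop | [/(ugcd_eq1P _ c_gt0) ucop_c /(ugcd_eq1P _ m_gt0) ucop_m]].
  split; apply/ugcd_eq1P => // r r_pr rd.
    by rewrite -(logn_Mcoprime c_gt0 m_gt0 rd cop); apply: ucop; rewrite ?dvdn_mulr.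
  by rewrite -(lognMr _ rd); apply: ucop; rewrite ?dvdn_mull.
move=> r r_pr; rewrite Euclid_dvdM // => /orP[rc | rm].
  by rewrite logn_Mcoprime //; apply: ucop_c.
by rewrite lognMr //; apply: ucop_m.
Qed.

Lemma ugcd_eq1_modn j m : (0 < m)%N -> (ugcd (j %% m) m == 1%N) = (ugcd j m == 1%N).
Proof.
move=> m_gt0; have dvd_mod r : (r ^ logn r m %| j %% m)%N = (r ^ logn r m %| j)%N.
  by rewrite /dvdn (modn_dvdm j (pfactor_dvdnn r m)).
apply/(ugcd_eq1P _ m_gt0)/(ugcd_eq1P _ m_gt0) => ucop r r_pr rm.
  by rewrite -dvd_mod; apply: ucop.
by rewrite dvd_mod; apply: ucop.
Qed.

Lemma ugcd_eq1_coprimeMl c t m : (0 < m)%N -> coprime c m ->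
  (ugcd (c * t) m == 1%N) = (ugcd t m == 1%N).
Proof.
move=> m_gt0 cop; have r'c r : (r %| m)%N -> coprime (r ^ logn r m) c.
  by move=> rm; rewrite coprimeXl // coprime_sym (coprime_dvdr rm cop).
apply/(ugcd_eq1P _ m_gt0)/(ugcd_eq1P _ m_gt0) => ucop r r_pr rm.
  by rewrite -(Gauss_dvdr _ (r'c r rm)); apply: ucop.
by rewrite (Gauss_dvdr _ (r'c r rm)); apply: ucop.
Qed.

Lemma ugcd_eq1_dvd j m : (1 < m)%N -> (m %| j)%N -> (ugcd j m == 1%N) = false.
Proof.
move=> m_gt1 mj; apply/(ugcd_eq1P _ (ltnW m_gt1)) => /(_ _ (pdiv_prime m_gt1) (pdiv_dvd m)).
by rewrite (dvdn_trans (pfactor_dvdnn _ _) mj).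
Qed.

Local Open Scope ring_scope.

Lemma big_nat_mul_residues (R : Type) (idx : R) (op : Monoid.com_law idx) a b (F : nat -> R) :
  \big[op/idx]_(0 <= j < a * b) F j =
  \big[op/idx]_(0 <= r < a) \big[op/idx]_(0 <= k < b) F (r + a * k)%N.
Proof.
rewrite mulnC big_nat_mul exchange_big_nat; apply: eq_bigr => k _.
rewrite -{1}[(k * a)%N]add0n big_addn mulSn addnK.
by apply: eq_bigr => r _; rewrite mulnC.
Qed.

Lemma big_nat_dvd (R : Type) (idx : R) (op : Monoid.com_law idx) q m
    (P : pred nat) (F : nat -> R) : (0 < q)%N ->
  \big[op/idx]_(0 <= j < q * m | P j && (q %| j)%N) F j =
  \big[op/idx]_(0 <= t < m | P (q * t)%N) F (q * t)%N.
Proof.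
move=> q_gt0; rewrite big_mkcond big_nat_mul_residues big_ltn //=.
rewrite [X in op _ X]big_nat_cond [X in op _ X]big1 ?Monoid.mulm1.
  rewrite [RHS]big_mkcond; apply: eq_bigr => t _.
  by rewrite add0n dvdn_mulr ?andbT.
move=> r /andP[/andP[r_gt0 r_lt_q] _]; apply: big1 => k _.
rewrite dvdn_addl ?dvdn_mulr // andbC.
by case: (boolP (q %| r)%N) => // /(dvdn_leq r_gt0); rewrite leqNgt r_lt_q.
Qed.

Section PrimitiveRootProducts.
Variable F : fieldType.

Lemma prod_1_subM_prim_root (w y : F) q : q.-primitive_root w ->
  \prod_(0 <= k < q) (1 - y * w ^+ k) = 1 - y ^+ q.
Proof.
move=> w_prim; have q_gt0 := prim_order_gt0 w_prim.
have [->|y_neq0] := eqVneq y 0.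
  by rewrite expr0n gtn_eqF // subr0 big1 // => k _; rewrite mul0r subr0.
have := congr1 (horner^~ y^-1) (factor_Xn_sub_1 w_prim).
rewrite horner_prod hornerD hornerN hornerXn hornerC => /(congr1 ( *%R (y ^+ q))).
rewrite mulrBr -exprMn divff // expr1n mulr1 => <-.
rewrite -[in X in X * _](subn0 q) -prodr_const_nat -big_split /=.
by apply: eq_bigr => k _; rewrite hornerXsubC mulrBr divff.
Qed.

Lemma prod_1_sub_prim_root (z : F) n : n.-primitive_root z ->
  \prod_(1 <= j < n) (1 - z ^+ j) = n%:R.
Proof.
move=> z_prim; have n_gt0 := prim_order_gt0 z_prim.
have := factor_Xn_sub_1 z_prim; rewrite big_ltn // expr0 subrX1 => factorization.
have X1_neq0 : 'X - 1 != 0 :> {poly F} by rewrite -polyC1 polyXsubC_eq0.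
have := congr1 (horner^~ 1) (mulfI X1_neq0 factorization).
rewrite horner_prod horner_sum; under eq_bigr do rewrite hornerXsubC.
move=> ->; under eq_bigr do rewrite hornerXn expr1n.
by rewrite sumr_const card_ord.
Qed.

Variables (z : F) (q m : nat) (B : pred nat).
Hypothesis z_prim : (q * m).-primitive_root z.
Hypothesis B_mod : forall j, B (j %% m)%N = B j.

Lemma prod_1_sub_prim_root_periodic :
  \prod_(0 <= j < q * m | B j) (1 - z ^+ j) =
  \prod_(0 <= t < m | B t) (1 - z ^+ (q * t)).
Proof.
have q_gt0 : (0 < q)%N by move: (prim_order_gt0 z_prim); rewrite muln_gt0 => /andP[].
have zm_prim : q.-primitive_root (z ^+ m).
  by have := dvdn_prim_root z_prim (dvdn_mulr m (dvdnn q)); rewrite mulKn.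
rewrite big_mkcond [RHS]big_mkcond mulnC big_nat_mul_residues; apply: eq_bigr => r _.
have B_shift k : B (r + m * k)%N = B r by rewrite -B_mod addnC mulnC modnMDl B_mod.
under eq_bigr do rewrite B_shift; case: (B r); last by rewrite big1.
rewrite mulnC exprM -(@prod_1_subM_prim_root _ (z ^+ r) _ zm_prim).
by apply: eq_bigr => k _; rewrite exprD exprM.
Qed.

(* The products over B and over its multiples of q both equal the right-hand
   side of prod_1_sub_prim_root_periodic, which is nonzero. *)
Lemma prod_1_sub_prim_root_ndvd :
  (forall t, B (q * t)%N = B t) -> B 0%N = false ->
  \prod_(0 <= j < q * m | B j && ~~ (q %| j)%N) (1 - z ^+ j) = 1.
Proof.
move=> B_mul B0.
have q_gt0 : (0 < q)%N by move: (prim_order_gt0 z_prim); rewrite muln_gt0 => /andP[].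
have G_neq0 : \prod_(0 <= t < m | B t) (1 - z ^+ (q * t)) != 0.
  rewrite prodf_seq_neq0; apply/allP => t; rewrite mem_index_iota => /andP[_ t_lt_m].
  apply/implyP => Bt; rewrite subr_eq0 eq_sym -(prim_order_dvd z_prim) dvdn_pmul2l //.
  have t_gt0 : (0 < t)%N by case: t Bt {t_lt_m} => [|t]; rewrite ?B0.
  by apply/negP => /(dvdn_leq t_gt0); rewrite leqNgt t_lt_m.
apply: (mulfI G_neq0); rewrite mulr1 -{2}prod_1_sub_prim_root_periodic.
by rewrite [in RHS](bigID (fun j => q %| j)%N) /= big_nat_dvd // (eq_bigl _ _ B_mul).
Qed.
End PrimitiveRootProducts.

Fixpoint cheb {R : nzRingType} (k : nat) : {poly R} :=
  match k with
  | 0 => 1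
  | k.+1 => if k is k'.+1 then 'X *+ 2 * cheb k - cheb k' else 'X
  end.

Lemma map_cheb (R S : nzRingType) (f : {rmorphism R -> S}) k :
  map_poly f (cheb k) = cheb k.
Proof.
suff: map_poly f (cheb k) = cheb k /\ map_poly f (cheb k.+1) = cheb k.+1 by case.
elim: k => [|k [IHk IHk1]]; first by rewrite /= rmorph1 map_polyX.
by split=> //=; rewrite rmorphB rmorphM rmorphMn /= map_polyX IHk IHk1.
Qed.

Lemma norm_unity_root (R : numDomainType) (y : R) k :
  (0 < k)%N -> `|y| ^+ k = 1 -> `|y| = 1.
Proof. by move=> k_gt0 yk; apply/eqP; rewrite -(pexpr_eq1 k_gt0) ?normr_ge0 // yk. Qed.

Section UnitCircle.
Variable C : numClosedFieldType.
Implicit Types y : C.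

Lemma Re_exprSS y k : `|y| = 1 ->
  'Re (y ^+ k.+2) = 2 * 'Re y * 'Re (y ^+ k.+1) - 'Re (y ^+ k).
Proof.
move=> y_unit; have yyC : y * y^* = 1 by rewrite -normCK y_unit expr1n.
have -> : y ^+ k = y ^+ k.+1 * y^* by rewrite exprSr -mulrA yyC mulr1.
by rewrite exprSr !ReM Re_conj Im_conj; ring.
Qed.

Lemma horner_cheb_Re y k : `|y| = 1 -> (cheb k).['Re y] = 'Re (y ^+ k).
Proof.
move=> y_unit.
suff: (cheb k).['Re y] = 'Re (y ^+ k) /\ (cheb k.+1).['Re y] = 'Re (y ^+ k.+1) by case.
elim: k => [|k [IHk IHk1]].
  by rewrite /= hornerC hornerX expr0 expr1 (Creal_ReP _ (rpred1 _)).
split=> //=; rewrite hornerD hornerN hornerM hornerMn hornerX IHk IHk1.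
by rewrite Re_exprSS // mulr_natl mulrnAl.
Qed.

Lemma Re_eq_conj y1 y2 : `|y1| = `|y2| -> 'Re y1 = 'Re y2 -> y1 = y2 \/ y1 = y2^*.
Proof.
move=> eq_norm eq_Re.
have [ImM_ge0 | /ltW ImM_le0] := real_ge0P (rpredM (Creal_Im y1) (Creal_Im y2)).
  by left; apply: eqC_semipolar.
right; apply: eqC_semipolar; rewrite ?norm_conjC ?Re_conj //.
by rewrite Im_conj mulrN oppr_ge0.
Qed.

Lemma Re_unit_geN1 y : `|y| = 1 -> -1 <= 'Re y.
Proof.
move=> y_unit; have := (leif_Re_Creal (- y)).1.
by rewrite normrN y_unit raddfN lerNl.
Qed.

Lemma Re_unit_le1 y : `|y| = 1 -> 'Re y <= 1.
Proof. by move=> y_unit; have := (leif_Re_Creal y).1; rewrite y_unit. Qed.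

Lemma Re_unit_gtN1 y : `|y| = 1 -> y != -1 -> -1 < 'Re y.
Proof.
move=> y_unit y_neqN1; rewrite lt_neqAle Re_unit_geN1 // andbT; apply/eqP => ReN1.
have norm_eq : `|y| = `|-1 : C| by rewrite normrN1.
have Re_eq : 'Re y = 'Re (-1 : C) by rewrite -ReN1 (Creal_ReP _ (rpredN1 _)).
by case: (Re_eq_conj norm_eq Re_eq) y_neqN1 => ->; rewrite ?conjCN1 eqxx.
Qed.
End UnitCircle.

(* The intermediate value theorem for cheb m - Re e, over the real closed
   field algR. *)
Lemma unit_Re_ivt (x0 e : algC) m : `|x0| = 1 -> `|e| = 1 -> 'Re (x0 ^+ m) <= 'Re e ->
  exists2 y : algC, [/\ `|y| = 1, 0 <= 'Im y & 'Re x0 <= 'Re y] & 'Re (y ^+ m) = 'Re e.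
Proof.
move=> x0_unit e_unit le_x0m_e.
pose a := in_algR (Creal_Re x0); pose P := cheb m - (in_algR (Creal_Re e))%:P.
have P_val x : algRval P.[x] = (cheb m).[algRval x] - 'Re e.
  by rewrite -horner_map rmorphB /= map_cheb map_polyC /= hornerD hornerN hornerC.
have [x /andP[ax x1] /eqP Px0] : exists2 x, a <= x <= 1 & root P x.
  apply: poly_ivt; first exact: Re_unit_le1.
  apply/andP; split.
    by rewrite -[_ <= 0]/(algRval P.[a] <= 0) P_val /= horner_cheb_Re // subr_le0.
  rewrite -[0 <= _]/(0 <= algRval P.[1]) P_val /=.
  have := horner_cheb_Re m (normr1 algC); rewrite expr1n (Creal_ReP _ (rpred1 _)) => ->.
  by rewrite subr_ge0 Re_unit_le1.
set X := algRval x in ax x1.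
have chebX : (cheb m).[X] = 'Re e by apply/eqP; rewrite -subr_eq0 -P_val Px0.
have X_real : X \is Num.real := algRvalP x.
have sq_ge0 : 0 <= 1 - X ^+ 2.
  have XN1 : -1 <= X := le_trans (Re_unit_geN1 x0_unit) ax.
  have -> : 1 - X ^+ 2 = (1 - X) * (1 + X) by ring.
  by rewrite mulr_ge0 ?subr_ge0 // -lerBlDl sub0r.
pose y := X + 'i * sqrtC (1 - X ^+ 2).
have sqrt_real : sqrtC (1 - X ^+ 2) \is Num.real by rewrite ger0_real ?sqrtC_ge0.
have [Re_y Im_y] : 'Re y = X /\ 'Im y = sqrtC (1 - X ^+ 2).
  by rewrite Re_rect ?Im_rect.
have y_unit : `|y| = 1.
  by apply: (@norm_unity_root _ _ 2) => //; rewrite normC2_Re_Im Re_y Im_y sqrtCK addrC subrK.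
exists y; first by rewrite Re_y Im_y sqrtC_ge0.
by rewrite -horner_cheb_Re // Re_y.
Qed.

(* w = n.-root (-1) has the largest real part among the n-th roots of -1 with
   nonnegative imaginary part (rootC_Re_max). If already w^m = -1, choose
   e = -eps with eps a primitive p-th root of unity: the intermediate value
   theorem yields y on the upper unit semicircle with Re w <= Re y and y^m equal
   to e or its conjugate, so y^n = -1, and Re (y^m) <> -1 forces Re y > Re w. *)
Lemma rootN1_exprN1_odd n m p : (0 < n)%N -> n = (m * p)%N -> odd p ->
  n.-root (-1 : algC) ^+ m = -1 -> p = 1%N.
Proof.
move=> n_gt0 def_n p_odd wmN1; set w := n.-root (-1) in wmN1.
apply/eqP; apply: contraT => p_neq1.
have p_gt1 : (1 < p)%N by case: p p_odd p_neq1 {def_n} => [|[|p]].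
have wnN1 : w ^+ n = -1 by rewrite rootCK.
have w_unit : `|w| = 1.
  by apply: (norm_unity_root n_gt0); rewrite -normrX wnN1 normrN1.
have [eps eps_prim] := C_prim_root_exists (ltnW p_gt1).
have epN1 : (- eps) ^+ p = -1.
  by rewrite exprNn (prim_expr_order eps_prim) mulr1 -signr_odd p_odd.
have ep_unit : `|- eps| = 1.
  by apply: (norm_unity_root (ltnW p_gt1)); rewrite -normrX epN1 normrN1.
have ep_neqN1 : - eps != -1.
  by rewrite eqr_opp -[eps]expr1 -(prim_order_dvd eps_prim) dvdn1.
have Re_wm : 'Re (w ^+ m) = -1 by rewrite wmN1 (Creal_ReP _ (rpredN1 _)).
have [y [y_unit Im_y_ge0 Re_wy] Re_ym] : exists2 y : algC,
    [/\ `|y| = 1, 0 <= 'Im y & 'Re w <= 'Re y] & 'Re (y ^+ m) = 'Re (- eps).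
  by apply: unit_Re_ivt; rewrite ?Re_wm ?Re_unit_geN1.
have ynN1 : y ^+ n = -1.
  have ym_norm : `|y ^+ m| = `|- eps| by rewrite normrX y_unit ep_unit expr1n.
  rewrite def_n exprM; case: (Re_eq_conj ym_norm Re_ym) => ->//.
  by rewrite -rmorphXn epN1 /= conjCN1.
have Re_yw : 'Re y = 'Re w.
  by apply/eqP; rewrite eq_le Re_wy andbT (rootC_Re_max n_gt0 ynN1 Im_y_ge0).
have := Re_unit_gtN1 ep_unit ep_neqN1.
by rewrite -Re_ym -horner_cheb_Re // Re_yw horner_cheb_Re // Re_wm ltxx.
Qed.

(* The order d of w divides 2n but not n, so 2n/d is odd and w^(d/2) = -1. *)
Lemma rootN1_prim n : (0 < n)%N -> (2 * n).-primitive_root (n.-root (-1 : algC)).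
Proof.
move=> n_gt0; set w := n.-root (-1).
have wnN1 : w ^+ n = -1 by rewrite rootCK.
have N1_neq1 : (-1 : algC) != 1 by rewrite eq_sym -addr_eq0 -(natrD _ 1 1) pnatr_eq0.
have [d w_prim d_dvd] : {d | d.-primitive_root w & (d %| 2 * n)%N}.
  by apply: prim_order_exists; rewrite ?muln_gt0 // mulnC exprM wnN1 sqrrN expr1n.
have d_ndvd_n : ~~ (d %| n)%N by rewrite (prim_order_dvd w_prim) wnN1 (negbTE N1_neq1).
have [k def_2n] := dvdnP d_dvd.
have k_odd : odd k.
  apply: contraR d_ndvd_n; rewrite -dvdn2 => /dvdnP[k' def_k].
  apply/dvdnP; exists k'; apply/eqP.
  by rewrite -(eqn_pmul2l (isT : (0 < 2)%N)) def_2n def_k; apply/eqP; ring.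
have d_even : (2 %| d)%N.
  have cop2k : coprime 2 k by rewrite coprime_sym coprimen2.
  by rewrite -(Gauss_dvdr d cop2k) -def_2n dvdn_mulr.
have [d' def_d] := dvdnP d_even.
have def_n : n = (d' * k)%N.
  apply/eqP; rewrite -(eqn_pmul2l (isT : (0 < 2)%N)) def_2n def_d.
  by apply/eqP; ring.
have wd'N1 : w ^+ d' = -1.
  have : (w ^+ d') ^+ 2 == 1 by rewrite -exprM -def_d prim_expr_order.
  rewrite sqrf_eq1 => /orP[/eqP wd'1 | /eqP //]; move: N1_neq1.
  by rewrite -wnN1 def_n exprM wd'1 expr1n eqxx.
have k1 : k = 1%N := rootN1_exprN1_odd n_gt0 def_n k_odd wd'N1.
by rewrite def_2n k1 mul1n.
Qed.

Lemma zeta_prim n : (0 < n)%N -> n.-primitive_root (zeta n).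
Proof.
by move=> n_gt0; have := exp_prim_root (rootN1_prim n_gt0) 2; rewrite gcdnMr mulKn.
Qed.

Lemma big_nat_shift1 (R : Type) (idx : R) (op : Monoid.law idx) n (P : pred nat) F :
  P 0%N = false -> P n = false ->
  \big[op/idx]_(1 <= j < n.+1 | P j) F j = \big[op/idx]_(0 <= j < n | P j) F j.
Proof.
move=> P0 Pn; case: n Pn => [|n] Pn; first by rewrite !big_geq.
rewrite big_mkcond big_nat_recr //= Pn Monoid.mulm1 [RHS]big_mkcond.
by rewrite [RHS]big_ltn //= P0 Monoid.mul1m.
Qed.

Lemma uPhi_horner1E n :
  (uPhi n).[1] = \prod_(1 <= j < n.+1 | ugcd j n == 1%N) (1 - zeta n ^+ j).
Proof. by rewrite horner_prod; apply: eq_bigr => j _; rewrite hornerXsubC. Qed.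

Lemma uPhi1_horner1 : (uPhi 1).[1] = 0.
Proof.
rewrite uPhi_horner1E big_mkcond big_nat1 ugcd1n /=.
by have := prim_expr_order (zeta_prim (ltn0Sn 0)); rewrite expr1 => ->; rewrite subrr.
Qed.

Lemma uPhi_pfactor_horner1 p e : prime p -> (0 < e)%N -> (uPhi (p ^ e)).[1] = (p ^ e)%:R.
Proof.
move=> p_pr e_gt0; have pe_gt0 : (0 < p ^ e)%N by rewrite expn_gt0 prime_gt0.
rewrite uPhi_horner1E (eq_bigl _ _ (fun j => ugcd_eq1_pfactor j p_pr e_gt0)).
rewrite -(prod_1_sub_prim_root (zeta_prim pe_gt0)) big_mkcond big_nat_recr //=.
rewrite (dvdnn (p ^ e)) mulr1.
by apply: eq_big_nat => j /andP[j_gt0 j_lt_pe]; rewrite gtnNdvd.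
Qed.

Lemma uPhi_pfactorM_horner1 p a m : prime p -> (0 < a)%N -> (1 < m)%N -> coprime p m ->
  (uPhi (p ^ a * m)).[1] = 1.
Proof.
move=> p_pr a_gt0 m_gt1 p'm; set q := (p ^ a)%N; have m_gt0 := ltnW m_gt1.
have q_gt0 : (0 < q)%N by rewrite expn_gt0 prime_gt0.
have z_prim : (q * m).-primitive_root (zeta (q * m)) by rewrite zeta_prim ?muln_gt0 ?q_gt0.
have ugcd_qm j : (ugcd j (q * m) == 1%N) = (ugcd j m == 1%N) && ~~ (q %| j)%N.
  by rewrite ugcd_eq1M ?coprimeXl // ugcd_eq1_pfactor // andbC.
rewrite uPhi_horner1E (eq_bigl _ _ ugcd_qm) big_nat_shift1; first last.
- by rewrite dvdn_mulr ?andbF.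
- by rewrite dvdn0 andbF.
apply: (prod_1_sub_prim_root_ndvd z_prim) => [j | t | ]; first exact: ugcd_eq1_modn.
  by apply: ugcd_eq1_coprimeMl; rewrite ?coprimeXl.
exact: ugcd_eq1_dvd.
Qed.

Theorem lemma4p1 (n : nat) (n_gt0 : (0 < n)%N) :
  (n = 1%N -> (uPhi n).[1] = 0) /\
  (forall p e : nat, prime p -> (0 < e)%N -> n = (p ^ e)%N ->
     (uPhi n).[1] = (p ^ e)%:R) /\
  (n <> 1%N -> ~ (exists p e : nat, [/\ prime p, (0 < e)%N & n = (p ^ e)%N]) ->
     (uPhi n).[1] = 1).
Proof.
split=> [-> | ]; first exact: uPhi1_horner1.
split=> [p e p_pr e_gt0 -> | n_neq1 not_pfactor]; first exact: uPhi_pfactor_horner1.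
have n_gt1 : (1 < n)%N by case: n n_gt0 n_neq1 {not_pfactor} => [|[|n]].
have p_pr := pdiv_prime n_gt1; set p := pdiv n in p_pr.
have a_gt0 : (0 < logn p n)%N by rewrite logn_gt0 mem_primes p_pr n_gt0 pdiv_dvd.
have [m p'm def_n] := pfactor_coprime p_pr n_gt0.
have m_gt1 : (1 < m)%N.
  case: m {p'm} def_n => [|[|m]] // def_n; first by rewrite def_n in n_gt0.
  by case: not_pfactor; exists p, (logn p n); split=> //; rewrite {1}def_n mul1n.
by rewrite def_n mulnC uPhi_pfactorM_horner1.
Qed.
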